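(* Let $\mathbb{F}$ be a field, $H$ a finite additive subgroup of $\mathbb{F}$, and $m,d$ positive integers with $d<|H|$. For every $\vec v\in\mathbb{F}^m$ and every polynomial $P\in\mathbb{F}[X_1,\dots,X_m]$ of individual degree at most $d$, $$\sum_{\vec\alpha\in H^m}P(\vec\alpha+\vec v)=\kappa\cdot a_0^m,$$ where $\kappa$ is the coefficient of $X_1^{|H|-1}\cdots X_m^{|H|-1}$ in $P$ and $a_0$ is the coefficient of the linear term $X$ in the polynomial $\prod_{h\in H}(X-h)$. In particular, if $P$ has total degree strictly less than $m(|H|-1)$, the sum equals $0$. *)

From HB Require Import structures.
From mathcomp Require Import all_boot all_order all_algebra.
Set Implicit Arguments. Unset Strict Implicit. Unset Printing Implicit Defensive.
Import Order.TTheory GRing.Theory Num.Theory.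
Local Open Scope ring_scope.

(* A polynomial in F[X_1,...,X_m] of individual degree at most d is given by
   its coefficient array: for every exponent vector e : 'I_m -> {0..d},
   the coefficient c e of the monomial prod_i X_i^(e i). *)
Definition mpolyd (F : fieldType) (m d : nat) :=
  {ffun {ffun 'I_m -> 'I_d.+1} -> F}.

Definition meval (F : fieldType) (m d : nat) (P : mpolyd F m d) (x : 'I_m -> F) : F :=
  \sum_(e : {ffun 'I_m -> 'I_d.+1}) P e * \prod_(i < m) x i ^+ e i.

(* Coefficient of the monomial prod_i X_i^(n i) (n : exponent vector in nat);
   it is 0 when some n i exceeds d. *)
Definition mcoef (F : fieldType) (m d : nat) (P : mpolyd F m d) (n : 'I_m -> nat) : F :=
  \sum_(e : {ffun 'I_m -> 'I_d.+1} | [forall i, (e i : nat) == n i]) P e.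

Definition mtotdeg_lt (F : fieldType) (m d : nat) (P : mpolyd F m d) (k : nat) : Prop :=
  forall e : {ffun 'I_m -> 'I_d.+1}, P e != 0 -> (\sum_(i < m) (e i : nat) < k)%N.

Definition fin_add_subgroup (F : fieldType) (H : seq F) : Prop :=
  [/\ uniq H, 0 \in H & forall x y, x \in H -> y \in H -> x - y \in H].

From HB Require Import structures.
From mathcomp Require Import all_boot all_order all_algebra.
From mathcomp Require Import zify.

(* Summing over the grid (H + v)^m factors monomial by monomial into products
   of one-variable power sums  sum_(h in H) (h + v)^k  with  k <= d < |H|.
   Lagrange interpolation at the points of H gives
   sum_(h in H) g(h) / w(h) = [X^(|H|-1)] g  for  deg g < |H|,  where
   w(h) = prod_(h' <> h) (h - h').  As translation by h permutes H, w is
   constant on H, equal to  w(0) = a0.  Hence the power sum is a0 for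
   k = |H| - 1 and 0 otherwise, and only the coefficient of
   (X_1 ... X_m)^(|H|-1) survives. *)

Set Implicit Arguments.
Unset Strict Implicit.
Unset Printing Implicit Defensive.

Import Order.TTheory GRing.Theory Num.Theory.
Local Open Scope ring_scope.

Lemma coef1_prod_XsubC (R : comNzRingType) (s : seq R) : 0 \in s ->
  (\prod_(x <- s) ('X - x%:P))`_1 = \prod_(y <- rem 0 s) - y.
Proof.
move=> s0; rewrite (big_rem 0) //= subr0 coefXM /= -horner_coef0 horner_prod.
by apply: eq_bigr => y _; rewrite hornerXsubC sub0r.
Qed.

Section LagrangeInterpolation.
Variables (F : fieldType) (s : seq F).
Hypothesis s_uniq : uniq s.

Lemma lagrange_weight_neq0 x : \prod_(y <- rem x s) (x - y) != 0.
Proof.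
rewrite prodf_seq_neq0; apply/allP => y.
by rewrite (mem_rem_uniq _ s_uniq) inE subr_eq0 eq_sym => /andP[].
Qed.

Let L x := \prod_(y <- rem x s) ('X - y%:P).
Let w x := \prod_(y <- rem x s) (x - y).

Let size_L x : x \in s -> size (L x) = size s.
Proof. by move=> sx; rewrite size_prod_XsubC size_rem // prednK //; case: s sx. Qed.

Let L_sample x y : y \in s -> (L x).[y] = if y == x then w x else 0.
Proof.
move=> sy; case: eqP => [-> | yx].
  by rewrite horner_prod; apply: eq_bigr => z _; rewrite hornerXsubC.
apply/eqP; rewrite -rootE root_prod_XsubC (mem_rem_uniq _ s_uniq).
by rewrite inE sy andbT; apply/eqP.
Qed.

Lemma sum_horner_div_lagrange_weight (g : {poly F}) : (size g <= size s)%N ->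
  \sum_(x <- s) g.[x] / \prod_(y <- rem x s) (x - y) = g`_(size s).-1.
Proof.
move=> sg; set q := \sum_(x <- s) (g.[x] / w x) *: L x.
have q_sample y : y \in s -> q.[y] = g.[y].
  move=> sy; rewrite horner_sum (bigD1_seq y) //= hornerZ L_sample // eqxx.
  rewrite divfK ?lagrange_weight_neq0 // big1_seq ?addr0 // => x /andP[xy _].
  by rewrite hornerZ L_sample // eq_sym (negbTE xy) mulr0.
have size_q : (size q <= size s)%N.
  apply: leq_trans (size_sum _ _ _) _; apply/bigmax_leqP_seq => x sx _.
  by apply: leq_trans (size_scale_leq _ _) _; rewrite size_L.
have g_eq : g = q.
  apply/eqP; rewrite -subr_eq0; apply/eqP; apply: roots_geq_poly_eq0 s_uniq _.
    by apply/allP => y sy; rewrite rootE hornerD hornerN q_sample // subrr.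
  by apply: leq_trans (size_polyD _ _) _; rewrite size_polyN geq_max sg size_q.
rewrite [in RHS]g_eq coef_sum; apply: eq_big_seq => x sx.
by rewrite coefZ -(size_L sx) -lead_coefE (monicP (monic_prod_XsubC _ _ _)) mulr1.
Qed.

End LagrangeInterpolation.

Section AdditiveSubgroup.
Variables (F : fieldType) (H : seq F).
Hypothesis H_subgroup : fin_add_subgroup H.

Let H_uniq : uniq H. Proof. by case: H_subgroup. Qed.
Let H0 : 0 \in H. Proof. by case: H_subgroup. Qed.
Let H_sub x y : x \in H -> y \in H -> x - y \in H.
Proof. by case: H_subgroup => _ _; apply. Qed.
Let H_add x y : x \in H -> y \in H -> x + y \in H.
Proof.
move=> Hx Hy; have Hny : - y \in H by rewrite -sub0r H_sub.
by rewrite -[y]opprK H_sub.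
Qed.

Lemma perm_rem_subgroup h : h \in H ->
  perm_eq (rem h H) [seq h + c | c <- rem 0 H].
Proof.
move=> Hh; apply: uniq_perm; first exact: rem_uniq.
  by rewrite map_inj_uniq ?rem_uniq //; apply: addrI.
move=> x; rewrite (mem_rem_uniq _ H_uniq) inE; apply/andP/mapP => [[xh Hx] | [c]].
  exists (x - h); last by rewrite addrC subrK.
  by rewrite (mem_rem_uniq _ H_uniq) inE subr_eq0 xh H_sub.
rewrite (mem_rem_uniq _ H_uniq) inE => /andP[c0 Hc] ->.
by rewrite -subr_eq0 addrAC subrr add0r c0 H_add.
Qed.

Lemma lagrange_weight_subgroup h : h \in H ->
  \prod_(y <- rem h H) (h - y) = (\prod_(x <- H) ('X - x%:P))`_1.
Proof.
move=> Hh; rewrite coef1_prod_XsubC // (perm_big _ (perm_rem_subgroup Hh)) big_map.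
by apply: eq_bigr => c _; rewrite opprD addrA subrr sub0r.
Qed.

Lemma power_sum_subgroup_shift (v : F) (k : nat) : (k <= (size H).-1)%N ->
  \sum_(h <- H) (h + v) ^+ k =
    if k == (size H).-1 then (\prod_(x <- H) ('X - x%:P))`_1 else 0.
Proof.
move=> le_k_H; set a0 := _`_1.
have a0_neq0 : a0 != 0.
  by rewrite /a0 -(lagrange_weight_subgroup H0) lagrange_weight_neq0.
have size_g : (size (('X - (- v)%:P) ^+ k) <= size H)%N.
  have H_gt0 : (0 < size H)%N by case: (H) H0.
  by rewrite size_exp_XsubC; lia.
have := sum_horner_div_lagrange_weight H_uniq size_g.
rewrite (eq_big_seq (fun h => (h + v) ^+ k / a0)); last first.
  by move=> h Hh; rewrite lagrange_weight_subgroup // horner_exp hornerXsubC opprK.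
rewrite -mulr_suml => /(canRL (divfK a0_neq0)) ->.
case: eqP => [<- | ne_k_H].
  have /monicP : ('X - (- v)%:P) ^+ k \is monic by apply/monic_exp/monicXsubC.
  by rewrite lead_coefE size_exp_XsubC => ->; rewrite mul1r.
by rewrite nth_default ?mul0r // size_exp_XsubC; lia.
Qed.

End AdditiveSubgroup.

Section GridSum.
Variables (F : fieldType) (m d : nat) (P : mpolyd F m d).

Lemma sum_meval_grid n (x : 'I_m -> 'I_n -> F) :
  \sum_(alpha : {ffun 'I_m -> 'I_n}) meval P (fun i => x i (alpha i)) =
  \sum_(e : {ffun 'I_m -> 'I_d.+1}) P e * \prod_(i < m) \sum_(j < n) x i j ^+ e i.
Proof.
rewrite /meval exchange_big /=; apply: eq_bigr => e _.
by rewrite -mulr_sumr bigA_distr_bigA.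
Qed.

Lemma sum_coef_diag (k : nat) (a : F) :
  \sum_(e : {ffun 'I_m -> 'I_d.+1})
     P e * \prod_(i < m) (if (e i : nat) == k then a else 0) =
  mcoef P (fun _ => k) * a ^+ m.
Proof.
rewrite /mcoef mulr_suml [RHS]big_mkcond /=; apply: eq_bigr => e _.
case: ifP => [/forallP e_k | /negbT].
  by under eq_bigr => i _ do rewrite e_k; rewrite prodr_const card_ord.
by rewrite negb_forall => /existsP[i ne_i]; rewrite (bigD1 i) //= (negbTE ne_i) mul0r mulr0.
Qed.

Lemma mcoef_diag_eq0 (k : nat) : mtotdeg_lt P (m * k) -> mcoef P (fun _ => k) = 0.
Proof.
move=> deg_lt; rewrite /mcoef big1 // => e /forallP e_k.
apply/eqP/contraT => /deg_lt.
by rewrite (eq_bigr (fun _ => k)) ?sum_nat_const ?card_ord ?ltnn // => i _; apply/eqP.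
Qed.

End GridSum.

Theorem lemmaC5 (F : fieldType) (H : seq F) (m d : nat)
  (hH : fin_add_subgroup H) (hm : (0 < m)%N) (hd : (0 < d)%N)
  (hdH : (d < size H)%N) (v : 'I_m -> F) (P : mpolyd F m d) :
  let a0 := (\prod_(h <- H) ('X - h%:P))`_1 in
  let kappa := mcoef P (fun _ => (size H).-1) in
  (\sum_(alpha : {ffun 'I_m -> 'I_(size H)})
      meval P (fun i => nth 0 H (alpha i) + v i) = kappa * a0 ^+ m)
  /\ (mtotdeg_lt P (m * (size H).-1) ->
      \sum_(alpha : {ffun 'I_m -> 'I_(size H)})
        meval P (fun i => nth 0 H (alpha i) + v i) = 0).
Proof.
move=> a0 kappa.
have grid_sum : \sum_(alpha : {ffun 'I_m -> 'I_(size H)})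
    meval P (fun i => nth 0 H (alpha i) + v i) = kappa * a0 ^+ m.
  rewrite (sum_meval_grid P (fun i j => nth 0 H j + v i)) -sum_coef_diag; apply: eq_bigr => e _; congr (_ * _).
  apply: eq_bigr => i _; rewrite -(power_sum_subgroup_shift hH (v i)) //.
    by rewrite (big_nth 0) big_mkord.
  by rewrite -ltnS (ltn_predK hdH) (leq_trans (ltn_ord (e i))).
by split=> // deg_lt; rewrite grid_sum /kappa mcoef_diag_eq0 ?mul0r.
Qed.
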